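(* Let $M$ be a countable transitive model of $\mathrm{ZFU}_R$, let $\mathbb{P} \in M$ be a forcing poset, and let $G$ be an $M$-generic filter over $\mathbb{P}$. Then $M[G] = M[G]_{\#}$, i.e. the generic extension built from the new $\mathbb{P}$-names coincides with the generic extension built from the old $\mathbb{P}$-names in which each urelement is its own name.
   Context: $\mathrm{ZFU}_R$ is ZF with urelements formulated with Replacement: Axiom $\mathcal{A}$ (urelements have no members), Extensionality for sets, Foundation, Pairing, Union, Powerset, Separation, Infinity, and Replacement. Old names: $\tau$ is a $\mathbb{P}$-name$_{\#}$ iff $\tau$ is a urelement or a set of pairs $\langle \sigma, p\rangle$ with $\sigma$ a $\mathbb{P}$-name$_{\#}$ and $p \in \mathbb{P}$; $M^{\mathbb{P}}_{\#}$ is the class of such names in $M$; $\tau_G = \tau$ if $\tau$ is a urelement, and otherwise $\tau_G = \{\sigma_G : \exists p \in G\ \langle \sigma, p\rangle \in \tau\}$; $M[G]_{\#} = \{\tau_G : \tau \in M^{\mathbb{P}}_{\#}\}$. New names: $\dot{x}$ is a $\mathbb{P}$-name iff (i) $\dot{x}$ is a set of pairs $\langle y, p\rangle$ with $p \in \mathbb{P}$ and $y$ either a $\mathbb{P}$-name or a urelement, and (ii) whenever $\langle a, p\rangle, \langle y, q\rangle \in \dot{x}$ with $a$ a urelement and $a \neq y$, $p$ and $q$ are incompatible; $M^{\mathbb{P}}$ is the class of such names in $M$; $\dot{x}_G = a$ if $a$ is a urelement with $\langle a, p\rangle \in \dot{x}$ for some $p \in G$, and otherwise $\dot{x}_G =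 \{\dot{y}_G : \langle \dot{y}, p\rangle \in \dot{x},\ \dot{y} \in M^{\mathbb{P}},\ p \in G\}$; $M[G] = \{\dot{x}_G : \dot{x} \in M^{\mathbb{P}}\}$. *)

From Stdlib Require Import Arith.

Section ZFU.
Context {U : Type} (mem : U -> U -> Prop) (ur : U -> Prop).

Record ZFU_universe : Prop := {
  amb_A : forall a x, ur a -> ~ mem x a;
  amb_ext : forall x y, ~ ur x -> ~ ur y -> (forall z, mem z x <-> mem z y) -> x = y;
  amb_wf : well_founded mem;
  amb_pair : forall x y, exists z, ~ ur z /\ forall w, mem w z <-> (w = x \/ w = y);
  amb_union : forall F, exists A, ~ ur A /\
      forall x, mem x A <-> exists Y, mem Y F /\ mem x Y;
  amb_power : forall x, exists y, ~ ur y /\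
      forall z, mem z y <-> (~ ur z /\ forall w, mem w z -> mem w x);
  amb_sep : forall (P : U -> Prop) x, exists y, ~ ur y /\
      forall z, mem z y <-> (mem z x /\ P z);
  amb_repl : forall (R : U -> U -> Prop) a,
      (forall x, mem x a -> forall y y', R x y -> R x y' -> y = y') ->
      exists b, ~ ur b /\ forall y, mem y b <-> exists x, mem x a /\ R x y;
  amb_inf : exists x, ~ ur x /\
      (exists e, mem e x /\ ~ ur e /\ forall w, ~ mem w e) /\
      (forall y, mem y x -> exists s, mem s x /\ ~ ur s /\
          forall w, mem w s <-> (mem w y \/ w = y))
}.

(** * First-order formulas of the language {mem, Ur} (de Bruijn variables)
    and satisfaction in the substructure with domain D. *)
Inductive form : Type :=
| FMem : nat -> nat -> form
| FEq  : nat -> nat -> form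
| FUr  : nat -> form
| FBot : form
| FImp : form -> form -> form
| FAll : form -> form.

Definition scons (x : U) (e : nat -> U) : nat -> U :=
  fun n => match n with 0 => x | S k => e k end.

Fixpoint sat (D : U -> Prop) (e : nat -> U) (phi : form) : Prop :=
  match phi with
  | FMem i j => mem (e i) (e j)
  | FEq i j => e i = e j
  | FUr i => ur (e i)
  | FBot => False
  | FImp p q => sat D e p -> sat D e q
  | FAll p => forall x, D x -> sat D (scons x e) p
  end.

Definition env_in (D : U -> Prop) (e : nat -> U) : Prop := forall n, D (e n).

Record models_ZFU_R (D : U -> Prop) : Prop := {
  m_A : forall a, D a -> ur a -> forall x, D x -> ~ mem x a;
  m_ext : forall x y, D x -> D y -> ~ ur x -> ~ ur y ->
      (forall z, D z -> (mem z x <-> mem z y)) -> x = y;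
  m_found : forall x, D x -> (exists y, D y /\ mem y x) ->
      exists y, D y /\ mem y x /\ ~ (exists z, D z /\ mem z y /\ mem z x);
  m_pair : forall x y, D x -> D y -> exists z, D z /\ ~ ur z /\ mem x z /\ mem y z;
  m_union : forall F, D F -> exists A, D A /\ ~ ur A /\
      forall Y x, D Y -> D x -> mem x Y -> mem Y F -> mem x A;
  m_power : forall x, D x -> exists y, D y /\ ~ ur y /\
      forall z, D z -> ~ ur z -> (forall w, D w -> mem w z -> mem w x) -> mem z y;
  m_sep : forall (phi : form) (e : nat -> U), env_in D e ->
      forall x, D x -> exists y, D y /\ ~ ur y /\
        forall z, D z -> (mem z y <-> (mem z x /\ sat D (scons z e) phi));
  m_inf : exists x, D x /\ ~ ur x /\
      (exists o, D o /\ mem o x /\ ~ ur o /\ forall w, D w -> ~ mem w o) /\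
      (forall y, D y -> mem y x -> exists s, D s /\ mem s x /\ ~ ur s /\
          forall w, D w -> (mem w s <-> (mem w y \/ w = y)));
  m_repl : forall (phi : form) (e : nat -> U), env_in D e ->
      forall a, D a ->
      (forall x, D x -> mem x a ->
         exists y, D y /\ sat D (scons y (scons x e)) phi /\
           forall y', D y' -> sat D (scons y' (scons x e)) phi -> y' = y) ->
      exists b, D b /\ ~ ur b /\
        forall x, D x -> mem x a ->
          exists y, D y /\ mem y b /\ sat D (scons y (scons x e)) phi
}.

Definition dom (m : U) : U -> Prop := fun x => mem x m.

Definition transitive_set (m : U) : Prop :=
  forall x y, mem x m -> mem y x -> mem y m.

Definition countable_set (m : U) : Prop :=
  exists f : U -> nat, forall x y, mem x m -> mem y m -> f x = f y -> x = y.

Definition ctm_ZFU_R (m : U) : Prop :=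
  ~ ur m /\ transitive_set m /\ countable_set m /\ models_ZFU_R (dom m).

Definition is_pair (z a b : U) : Prop :=
  ~ ur z /\ forall w, mem w z <->
    ((~ ur w /\ forall u, mem u w <-> u = a) \/
     (~ ur w /\ forall u, mem u w <-> (u = a \/ u = b))).

Definition pair_in (t a b : U) : Prop := exists z, mem z t /\ is_pair z a b.

(** Forcing posets (P, le, one), with le a set of pairs: a preorder with a
    largest element one (Kunen's convention). *)
Section Forcing.
Variables (P le one : U).

Definition leP (p q : U) : Prop := pair_in le p q.

Definition forcing_poset : Prop :=
  ~ ur P /\ ~ ur le /\
  (forall z, mem z le -> exists p q, is_pair z p q /\ mem p P /\ mem q P) /\
  mem one P /\
  (forall p, mem p P -> leP p p) /\
  (forall p q r, mem p P -> mem q P -> mem r P -> leP p q -> leP q r -> leP p r) /\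
  (forall p, mem p P -> leP p one).

Definition compatible (p q : U) : Prop :=
  exists r, mem r P /\ leP r p /\ leP r q.

Definition dense (D : U) : Prop :=
  (forall d, mem d D -> mem d P) /\
  forall p, mem p P -> exists d, mem d D /\ leP d p.

Definition filter (G : U) : Prop :=
  (forall p, mem p G -> mem p P) /\
  mem one G /\
  (forall p q, mem p G -> mem q P -> leP p q -> mem q G) /\
  (forall p q, mem p G -> mem q G -> exists r, mem r G /\ leP r p /\ leP r q).

Definition generic (m G : U) : Prop :=
  filter G /\ forall D, mem D m -> dense D -> exists p, mem p D /\ mem p G.

Inductive old_name : U -> Prop :=
| old_name_ur : forall a, ur a -> old_name a
| old_name_set : forall t, ~ ur t ->
    (forall z, mem z t -> exists s p, is_pair z s p /\ old_name s /\ mem p P) ->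
    old_name t.

Inductive old_eval (G : U) : U -> U -> Prop :=
| old_eval_ur : forall a, ur a -> old_eval G a a
| old_eval_set : forall t x, ~ ur t -> ~ ur x ->
    (forall z, mem z x -> exists s p, pair_in t s p /\ mem p G /\ old_eval G s z) ->
    (forall s p, pair_in t s p -> mem p G -> exists z, mem z x /\ old_eval G s z) ->
    old_eval G t x.

Inductive new_name : U -> Prop :=
| new_name_intro : forall x, ~ ur x ->
    (forall z, mem z x -> exists y p, is_pair z y p /\ mem p P /\
        (new_name y \/ ur y)) ->
    (forall a p y q, ur a -> pair_in x a p -> pair_in x y q -> a <> y ->
        ~ compatible p q) ->
    new_name x.

Inductive new_eval (G : U) : U -> U -> Prop :=
| new_eval_ur : forall x a p, ur a -> pair_in x a p -> mem p G -> new_eval G x a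
| new_eval_set : forall x v,
    ~ (exists a p, ur a /\ pair_in x a p /\ mem p G) ->
    ~ ur v ->
    (forall z, mem z v -> exists y p, pair_in x y p /\ new_name y /\ mem p G /\
        new_eval G y z) ->
    (forall y p, pair_in x y p -> new_name y -> mem p G ->
        exists z, mem z v /\ new_eval G y z) ->
    new_eval G x v.

Definition ext_old (m G : U) : U -> Prop :=
  fun x => exists t, mem t m /\ old_name t /\ old_eval G t x.

Definition ext_new (m G : U) : U -> Prop :=
  fun x => exists t, mem t m /\ new_name t /\ new_eval G t x.

End Forcing.
End ZFU.

(* Both inclusions are proved by translating names inside M, by recursion on the
   relation "w is the first component of a pair in u", which is well founded,
   set-like and definable, so that Separation and Replacement in M carry the
   recursion out: the value at u is the unique one occurring in any "attempt",
   a set of pairs each computed from the attempt itself.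

   An old name t becomes the new name t* obtained by replacing every urelement a
   by {(a, 1)}; then t*_G = t_G.  Conversely, a new name x whose value is a
   urelement has that urelement as old name, and otherwise x becomes an old name
   x° with, for every child (y, p) of x, the pairs (a, r) for the urelement pairs
   (a, q) of y and r <= p, q, and the pairs (y°, r) for r <= p incompatible with
   every urelement pair of y.  The conditions lying below the condition of some
   urelement pair of y or incompatible with all of them are dense, so G meets
   them; hence if y_G is a set, G contains a condition of the second kind below
   p, and in all cases x°_G = x_G. *)

From Pilot Require Import Defs.
From Stdlib Require Import Arith Classical.
From Stdlib Require Import Relation_Operators Transitive_Closure Inclusion.

(** * Definable predicates *)

Fixpoint rename (r : nat -> nat) (f : form) : form :=
  match f with
  | FMem i j => FMem (r i) (r j)
  | FEq i j => FEq (r i) (r j)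
  | FUr i => FUr (r i)
  | FBot => FBot
  | FImp a b => FImp (rename r a) (rename r b)
  | FAll a => FAll (rename (scons 0 (fun k => S (r k))) a)
  end.

Definition interleave {A : Type} (e c : nat -> A) (n : nat) : A :=
  if Nat.even n then e (Nat.div2 n) else c (Nat.div2 n).

Lemma interleave_even {A} (e c : nat -> A) k : interleave e c (2 * k) = e k.
Proof. unfold interleave. rewrite Nat.even_mul, Nat.div2_double. reflexivity. Qed.

Lemma interleave_odd {A} (e c : nat -> A) k : interleave e c (2 * k + 1) = c k.
Proof.
  unfold interleave. rewrite Nat.even_add, Nat.even_mul, Nat.add_1_r, Nat.div2_succ_double.
  reflexivity.
Qed.

Lemma interleave_pointwise {A} (F : nat -> A) g h e c :
  (forall k, F (g k) = e k) -> (forall k, F (h k) = c k) ->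
  forall n, F (interleave g h n) = interleave e c n.
Proof. intros Hg Hh n. unfold interleave. destruct (Nat.even n); auto. Qed.

Ltac simpl_interleave :=
  repeat (first [rewrite interleave_even | rewrite interleave_odd]).

Section Definability.
Context {U : Type} {mem : U -> U -> Prop} {ur : U -> Prop} {D : U -> Prop}.
Hypothesis D_inhabited : exists x, D x.

Notation sat := (sat mem ur D).
Notation env := (env_in D).

Lemma sat_rename f r e e' : (forall n, e' (r n) = e n) -> sat e' (rename r f) <-> sat e f.
Proof.
  revert r e e'. induction f as [i j|i j|i| |f1 IH1 f2 IH2|f IH]; intros r e e' H; cbn.
  1-3: rewrite !H; tauto.
  - tauto.
  - rewrite (IH1 r e e' H), (IH2 r e e' H). tauto.
  - split; intros Hf x Hx; specialize (Hf x Hx); revert Hf; apply IH;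
      intros [|n]; cbn; auto.
Qed.

Lemma env_interleave e c : env e -> env c -> env (interleave e c).
Proof. intros He Hc n. unfold interleave. destruct (Nat.even n); auto. Qed.

Lemma env_scons x e : D x -> env e -> env (scons x e).
Proof. intros Hx He [|n]; cbn; auto. Qed.

(* Free variables sit at the even positions of the environment, the parameters
   (elements of D fixed once and for all) at the odd ones. *)
Definition definable (Q : (nat -> U) -> Prop) : Prop :=
  exists f c, env c /\ forall e, env e -> (sat (interleave e c) f <-> Q e).

Lemma definable_ext (Q Q' : (nat -> U) -> Prop) :
  (forall e, env e -> (Q e <-> Q' e)) -> definable Q -> definable Q'.
Proof.
  intros H [f [c [Hc Hf]]]. exists f, c. split; auto.
  intros e He. rewrite Hf by auto. auto.
Qed.

Lemma definable_atomic (Q : (nat -> U) -> Prop) f :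
  (forall c e, sat (interleave e c) f <-> Q e) -> definable Q.
Proof.
  intros Hf. destruct D_inhabited as [x Hx].
  exists f, (fun _ => x). split; [intros n; exact Hx|]. auto.
Qed.

Lemma definable_mem i j : definable (fun e => mem (e i) (e j)).
Proof.
  apply (definable_atomic _ (FMem (2 * i) (2 * j))). intros c e. cbn [Defs.sat].
  rewrite !interleave_even. reflexivity.
Qed.

Lemma definable_eq i j : definable (fun e => e i = e j).
Proof.
  apply (definable_atomic _ (FEq (2 * i) (2 * j))). intros c e. cbn [Defs.sat].
  rewrite !interleave_even. reflexivity.
Qed.

Lemma definable_ur i : definable (fun e => ur (e i)).
Proof.
  apply (definable_atomic _ (FUr (2 * i))). intros c e. cbn [Defs.sat].
  rewrite interleave_even. reflexivity.
Qed.

Lemma definable_False : definable (fun _ => False).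
Proof. apply (definable_atomic _ FBot). intros c e. reflexivity. Qed.

Lemma definable_imp Q1 Q2 :
  definable Q1 -> definable Q2 -> definable (fun e => Q1 e -> Q2 e).
Proof.
  intros [f1 [c1 [Hc1 H1]]] [f2 [c2 [Hc2 H2]]].
  (* The parameters of [f1] and [f2] are interleaved in turn. *)
  exists (FImp (rename (interleave (fun k => 2 * k) (fun k => 2 * (2 * k) + 1)) f1)
               (rename (interleave (fun k => 2 * k) (fun k => 2 * (2 * k + 1) + 1)) f2)),
         (interleave c1 c2).
  split; [apply env_interleave; auto|]. intros e He. cbn [Defs.sat].
  rewrite <- H1, <- H2 by auto. rewrite !sat_rename; [reflexivity| |];
    apply interleave_pointwise; intros k; simpl_interleave; reflexivity.
Qed.

Lemma definable_forall (A : U -> (nat -> U) -> Prop) :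
  definable (fun e => A (e 0) (fun n => e (S n))) ->
  definable (fun e => forall x, D x -> A x e).
Proof.
  intros [f [c [Hc H]]].
  exists (FAll (rename (interleave (scons 0 (fun k => S (2 * k))) (fun k => S (2 * k + 1))) f)), c.
  split; auto. intros e He. cbn [Defs.sat].
  assert (Hx : forall x, D x ->
    sat (scons x (interleave e c)) (rename (interleave (scons 0 (fun k => S (2 * k)))
      (fun k => S (2 * k + 1))) f) <-> A x e).
  { intros x Hx. rewrite (sat_rename f _ (interleave (scons x e) c)).
    - rewrite H by (apply env_scons; auto). reflexivity.
    - apply interleave_pointwise; intros [|k]; cbn [scons]; simpl_interleave; reflexivity. }
  split; intros Hall x Hdx; apply Hx; auto.
Qed.

Lemma definable_instantiate Q k : definable Q -> D k -> definable (fun e => Q (scons k e)).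
Proof.
  intros [f [c [Hc H]]] Hk.
  exists (rename (interleave (scons 1 (fun j => 2 * j)) (fun j => 2 * S j + 1)) f), (scons k c).
  split; [apply env_scons; auto|]. intros e He.
  rewrite (sat_rename f _ (interleave (scons k e) c)).
  - apply H, env_scons; auto.
  - apply interleave_pointwise; intros [|j]; cbn [scons]; simpl_interleave; reflexivity.
Qed.

Lemma definable_reindex Q (s : nat -> nat) :
  definable Q -> definable (fun e => Q (fun n => e (s n))).
Proof.
  intros [f [c [Hc H]]].
  exists (rename (interleave (fun k => 2 * s k) (fun k => 2 * k + 1)) f), c.
  split; auto. intros e He.
  rewrite (sat_rename f _ (interleave (fun n => e (s n)) c)).
  - apply H. intros n; apply He.
  - apply interleave_pointwise; intros k; simpl_interleave; reflexivity.
Qed.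

Lemma definable_not Q : definable Q -> definable (fun e => ~ Q e).
Proof. intros H. apply definable_imp; auto using definable_False. Qed.

Lemma definable_and Q1 Q2 :
  definable Q1 -> definable Q2 -> definable (fun e => Q1 e /\ Q2 e).
Proof.
  intros H1 H2. apply (definable_ext (fun e => ~ (Q1 e -> ~ Q2 e))).
  - intros e _. tauto.
  - auto using definable_not, definable_imp.
Qed.

Lemma definable_or Q1 Q2 :
  definable Q1 -> definable Q2 -> definable (fun e => Q1 e \/ Q2 e).
Proof.
  intros H1 H2. apply (definable_ext (fun e => ~ Q1 e -> Q2 e)).
  - intros e _. tauto.
  - auto using definable_not, definable_imp.
Qed.

Lemma definable_exists (A : U -> (nat -> U) -> Prop) :
  definable (fun e => A (e 0) (fun n => e (S n))) ->
  definable (fun e => exists x, D x /\ A x e).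
Proof.
  intros H. apply (definable_ext (fun e => ~ forall x, D x -> ~ A x e)).
  - intros e _. split.
    + intros Hn. apply NNPP. intros Hno. apply Hn. intros x Hx HA. eauto.
    + intros [x [Hx HA]] Hall. exact (Hall x Hx HA).
  - apply definable_not, definable_forall, definable_not, H.
Qed.

Lemma definable_mem_param i k : D k -> definable (fun e => mem (e i) k).
Proof. exact (definable_instantiate (fun e => mem (e (S i)) (e 0)) k (definable_mem _ _)). Qed.

Lemma definable_eq_param i k : D k -> definable (fun e => e i = k).
Proof. exact (definable_instantiate (fun e => e (S i) = e 0) k (definable_eq _ _)). Qed.

End Definability.

Arguments definable {U} mem ur D Q.

Create HintDb definable discriminated.

Ltac definable :=
  repeat (cbv beta; first
    [ solve [auto with nocore definable]
    | apply definable_forall | apply definable_exists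
    | apply definable_and | apply definable_or
    | apply definable_not | apply definable_imp
    | apply definable_mem | apply definable_eq | apply definable_ur
    | apply definable_mem_param; solve [assumption | auto with nocore definable]
    | apply definable_eq_param; solve [assumption | auto with nocore definable] ]).

(** * Sets in a transitive model *)

Section TransitiveModel.
Context {U : Type} (mem : U -> U -> Prop) (ur : U -> Prop).
Hypothesis HV : ZFU_universe mem ur.
Variable m : U.
Hypothesis Hm : ctm_ZFU_R mem ur m.

Notation D := (dom mem m).
Notation definable := (definable mem ur D).
Notation is_pair := (is_pair mem ur).
Notation pair_in := (pair_in mem ur).
Lemma set_ext x y : ~ ur x -> ~ ur y -> (forall z, mem z x <-> mem z y) -> x = y.
Proof. apply (amb_ext _ _ HV). Qed.

Lemma ur_no_mem a x : ur a -> ~ mem x a.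
Proof. intros Ha. apply (amb_A _ _ HV); auto. Qed.

Lemma dom_trans x y : D x -> mem y x -> D y.
Proof. destruct Hm as [_ [Ht _]]. exact (Ht x y). Qed.

Lemma dom_models : models_ZFU_R mem ur D.
Proof. apply Hm. Qed.

Lemma dom_inhabited : exists x, D x.
Proof. destruct (m_inf _ _ _ dom_models) as [x [Hx _]]. eauto. Qed.

#[local] Hint Resolve dom_inhabited : definable.

Lemma model_sep (q : U -> Prop) x : definable (fun e => q (e 0)) -> D x ->
  exists y, D y /\ ~ ur y /\ forall z, mem z y <-> mem z x /\ q z.
Proof.
  intros [f [c [Hc Hf]]] Hx.
  destruct (m_sep _ _ _ dom_models (rename (interleave (fun _ => 0) S) f) c Hc x Hx)
    as [y [Hy [Hyu Hyz]]].
  assert (Hq : forall z, D z -> sat mem ur D (scons z c) (rename (interleave (fun _ => 0) S) f) <-> q z).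
  { intros z Hz. rewrite (sat_rename _ _ (interleave (fun _ => z) c)).
    - apply Hf. intros n; exact Hz.
    - apply interleave_pointwise; reflexivity. }
  exists y. split; [|split]; auto. intros z. split.
  - intros Hzy. assert (Hz : D z) by exact (dom_trans y z Hy Hzy).
    rewrite <- Hq by exact Hz. apply Hyz; auto.
  - intros [Hzx Hqz]. assert (Hz : D z) by exact (dom_trans x z Hx Hzx).
    apply Hyz; auto. rewrite Hq; auto.
Qed.

Lemma model_repl (q : U -> U -> Prop) a : definable (fun e => q (e 0) (e 1)) -> D a ->
  (forall x, D x -> mem x a -> exists y, D y /\ q x y /\ forall y', D y' -> q x y' -> y' = y) ->
  exists b, D b /\ forall x, mem x a -> exists y, mem y b /\ q x y.
Proof.
  intros [f [c [Hc Hf]]] Ha Hfun.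
  set (f' := rename (interleave (scons 1 (fun _ => 0)) (fun k => S (S k))) f).
  assert (Hq : forall x y, D x -> D y -> sat mem ur D (scons y (scons x c)) f' <-> q x y).
  { intros x y Hx Hy. unfold f'. rewrite (sat_rename _ _ (interleave (scons x (fun _ => y)) c)).
    - apply Hf. intros [|n]; auto.
    - apply interleave_pointwise; intros [|k]; reflexivity. }
  destruct (m_repl _ _ _ dom_models f' c Hc a Ha) as [b [Hb [_ Hbm]]].
  { intros x Hx Hxa. destruct (Hfun x Hx Hxa) as [y [Hy [Hxy Hu]]].
    exists y. split; [|split]; auto.
    - apply Hq; auto.
    - intros y' Hy' Hxy'. apply Hu; auto. apply Hq; auto. }
  exists b. split; auto. intros x Hxa.
  assert (Hx : D x) by exact (dom_trans a x Ha Hxa).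
  destruct (Hbm x Hx Hxa) as [y [Hy [Hyb Hxy]]]. exists y. split; auto. apply Hq; auto.
Qed.

Lemma model_union F : D F -> exists A, D A /\ forall Y x, mem x Y -> mem Y F -> mem x A.
Proof.
  intros HF. destruct (m_union _ _ _ dom_models F HF) as [A [HA [_ H]]].
  exists A. split; auto. intros Y x Hx HY.
  assert (DY : D Y) by exact (dom_trans F Y HF HY).
  apply (H Y x); auto. exact (dom_trans Y x DY Hx).
Qed.

Lemma model_power x : D x -> exists y, D y /\
  forall z, D z -> ~ ur z -> (forall w, mem w z -> mem w x) -> mem z y.
Proof.
  intros Hx. destruct (m_power _ _ _ dom_models x Hx) as [y [Hy [_ H]]].
  exists y. split; auto.
Qed.

Lemma model_upair a b : D a -> D b ->
  exists s, D s /\ ~ ur s /\ forall u, mem u s <-> u = a \/ u = b.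
Proof.
  intros Ha Hb. destruct (m_pair _ _ _ dom_models a b Ha Hb) as [z [Hz [_ [Haz Hbz]]]].
  destruct (model_sep (fun u => u = a \/ u = b) z) as [s [Hs [Hsu Hsm]]]; auto.
  { definable. }
  exists s. split; [|split]; auto. intros u. rewrite Hsm.
  split; [tauto|]. intros [-> | ->]; auto.
Qed.

Lemma model_singleton a : D a -> exists s, D s /\ ~ ur s /\ forall u, mem u s <-> u = a.
Proof.
  intros Ha. destruct (model_upair a a Ha Ha) as [s [Hs [Hsu Hsm]]].
  exists s. split; [|split]; auto. intros u. rewrite Hsm. tauto.
Qed.

Lemma model_union2 A B : D A -> D B -> exists X, D X /\
  (forall x, mem x A -> mem x X) /\ (forall x, mem x B -> mem x X).
Proof.
  intros HA HB. destruct (model_upair A B HA HB) as [s [Hs [_ Hsm]]].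
  destruct (model_union s Hs) as [X [HX H]]. exists X.
  split; [exact HX|split]; intros x Hx; apply (H _ x Hx), Hsm; auto.
Qed.

Lemma model_union_union u : D u ->
  exists c, D c /\ forall z s x, mem z u -> mem s z -> mem x s -> mem x c.
Proof.
  intros Hu. destruct (model_union u Hu) as [A1 [HA1 H1]].
  destruct (model_union A1 HA1) as [A2 [HA2 H2]].
  exists A2. split; eauto.
Qed.

Lemma set_ext_dom v v' : D v -> D v' -> ~ ur v -> ~ ur v' ->
  (forall z, D z -> (mem z v <-> mem z v')) -> v = v'.
Proof.
  intros Hv Hv' Hvu Hv'u H. apply set_ext; auto. intros z. split; intros Hz.
  - apply H; auto. exact (dom_trans v z Hv Hz).
  - apply H; auto. exact (dom_trans v' z Hv' Hz).
Qed.

Lemma dom_members v (q : U -> Prop) : D v -> (forall z, D z -> (mem z v <-> q z)) ->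
  forall z, mem z v <-> D z /\ q z.
Proof.
  intros Hv H z. split.
  - intros Hz. assert (Dz : D z) by exact (dom_trans v z Hv Hz). split; auto. apply H; auto.
  - intros [Dz Hq]. apply H; auto.
Qed.

Lemma model_insert S z : D S -> D z ->
  exists S', D S' /\ forall y, mem y S' <-> mem y S \/ y = z.
Proof.
  intros HS Hz. destruct (model_singleton z Hz) as [s [Hs [_ Hsm]]].
  destruct (model_union2 S s HS Hs) as [X [HX [HSX HsX]]].
  destruct (model_sep (fun y => mem y S \/ y = z) X) as [S' [HS' [_ HS'm]]]; auto.
  { definable. }
  exists S'. split; auto. intros y. rewrite HS'm.
  split; [tauto|]. intros Hy. split; auto.
  destruct Hy as [Hy | ->]; [apply HSX | apply HsX, Hsm]; auto.
Qed.

Lemma ambient_upair a b : exists s, ~ ur s /\ forall u, mem u s <-> u = a \/ u = b.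
Proof. apply (amb_pair _ _ HV). Qed.

Lemma ambient_singleton a : exists s, ~ ur s /\ forall u, mem u s <-> u = a.
Proof.
  destruct (ambient_upair a a) as [s [Hs H]]. exists s. split; auto.
  intros u. rewrite H. tauto.
Qed.

Lemma is_pair_members z a b : is_pair z a b ->
  exists s1 s2, mem s1 z /\ mem a s1 /\ mem s2 z /\ mem b s2.
Proof.
  intros [_ Hz]. destruct (ambient_singleton a) as [s1 [Hs1 H1]].
  destruct (ambient_upair a b) as [s2 [Hs2 H2]].
  exists s1, s2. repeat split.
  - apply Hz. left. auto.
  - apply H1. reflexivity.
  - apply Hz. right. auto.
  - apply H2. auto.
Qed.

Lemma dom_pair_components z a b : D z -> is_pair z a b -> D a /\ D b.
Proof.
  intros Hz Hp. destruct (is_pair_members z a b Hp) as [s1 [s2 [H1 [H2 [H3 H4]]]]].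
  split; [apply (dom_trans s1) | apply (dom_trans s2)]; auto; apply (dom_trans z); auto.
Qed.

Lemma dom_pair_in_components t a b : D t -> pair_in t a b -> D a /\ D b.
Proof. intros Ht [z [Hz Hp]]. exact (dom_pair_components z a b (dom_trans t z Ht Hz) Hp). Qed.

Lemma pair_in_union_union t c a b :
  (forall z s x, mem z t -> mem s z -> mem x s -> mem x c) ->
  pair_in t a b -> mem a c /\ mem b c.
Proof.
  intros H [z [Hz Hp]]. destruct (is_pair_members z a b Hp) as [s1 [s2 [H1 [H2 [H3 H4]]]]].
  eauto.
Qed.

Lemma pair_in_mono S T a b : pair_in T a b -> (forall z, mem z T -> mem z S) -> pair_in S a b.
Proof. intros [z [Hz Hp]] H. exists z. auto. Qed.

Lemma is_pair_second z a b a' b' : is_pair z a b -> is_pair z a' b' -> b = a' \/ b = b'.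
Proof.
  intros H H'. destruct (ambient_upair a b) as [s [Hs Hsm]].
  assert (Hsz : mem s z) by (apply H; right; auto).
  apply H' in Hsz as [[_ Hsm']|[_ Hsm']].
  - left. apply Hsm', Hsm. auto.
  - apply Hsm', Hsm. auto.
Qed.

Lemma is_pair_inj z a b a' b' : is_pair z a b -> is_pair z a' b' -> a = a' /\ b = b'.
Proof.
  intros H H'.
  assert (a = a').
  { destruct (ambient_singleton a) as [s [Hs Hsm]].
    assert (Hsz : mem s z) by (apply H; left; auto).
    apply H' in Hsz as [[_ Hsm']|[_ Hsm']]; symmetry; apply Hsm, Hsm'; auto. }
  subst a'. split; auto.
  destruct (is_pair_second z a b a b' H H'), (is_pair_second z a b' a b H' H); congruence.
Qed.

Lemma is_pair_unique z z' a b : is_pair z a b -> is_pair z' a b -> z = z'.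
Proof. intros [Hz H] [Hz' H']. apply set_ext; auto. intros w. rewrite H, H'. tauto. Qed.

Lemma model_pair a b : D a -> D b -> exists z, D z /\ is_pair z a b.
Proof.
  intros Ha Hb. destruct (model_singleton a Ha) as [s1 [Hs1 [Hs1u Hs1m]]].
  destruct (model_upair a b Ha Hb) as [s2 [Hs2 [Hs2u Hs2m]]].
  destruct (model_upair s1 s2 Hs1 Hs2) as [z [Hz [Hzu Hzm]]].
  exists z. split; [|split]; auto. intros w. rewrite Hzm. split.
  - intros [-> | ->]; [left|right]; auto.
  - intros [[Hw H]|[Hw H]]; [left|right]; apply set_ext; auto; intros u;
      rewrite ?H, ?Hs1m, ?Hs2m; tauto.
Qed.

Lemma model_pairs_of X : D X ->
  exists C, D C /\ forall z a b, D z -> is_pair z a b -> mem a X -> mem b X -> mem z C.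
Proof.
  intros HX. destruct (model_power X HX) as [Y [HY HYm]].
  destruct (model_power Y HY) as [C [HC HCm]].
  exists C. split; auto. intros z a b Hz [Hzu Hzm] Ha Hb. apply HCm; auto.
  intros w Hw. assert (Dw : D w) by exact (dom_trans z w Hz Hw).
  apply Hzm in Hw as [[Hwu Hwm]|[Hwu Hwm]]; apply HYm; auto; intros u Hu; apply Hwm in Hu;
    [subst u | destruct Hu; subst u]; auto.
Qed.

Lemma members_relativize w (p : U -> Prop) : D w -> (forall u, p u -> D u) ->
  (forall u, mem u w <-> p u) <-> (forall u, D u -> (mem u w <-> p u)).
Proof.
  intros Hw Hp. split; intros H u; [intros _; apply H|].
  split; intros Hu; apply H; auto; eapply dom_trans; eauto.
Qed.

Lemma is_pair_relativize z a b : D z -> D a -> D b ->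
  is_pair z a b <-> ~ ur z /\ forall w, D w -> (mem w z <->
      (~ ur w /\ forall u, D u -> (mem u w <-> u = a)) \/
      (~ ur w /\ forall u, D u -> (mem u w <-> u = a \/ u = b))).
Proof.
  intros Hz Ha Hb. unfold Defs.is_pair.
  assert (Hcomp : forall w, D w ->
    ((~ ur w /\ forall u, mem u w <-> u = a) \/ (~ ur w /\ forall u, mem u w <-> u = a \/ u = b)) <->
    ((~ ur w /\ forall u, D u -> (mem u w <-> u = a)) \/
     (~ ur w /\ forall u, D u -> (mem u w <-> u = a \/ u = b)))).
  { intros w Hw.
    assert (Ha' : forall u, u = a -> D u) by (intros u ->; auto).
    assert (Hab : forall u, u = a \/ u = b -> D u) by (intros u [-> | ->]; auto).
    pose proof (members_relativize w _ Hw Ha') as E1.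
    pose proof (members_relativize w _ Hw Hab) as E2.
    tauto. }
  assert (Hdom : forall w, ((~ ur w /\ forall u, mem u w <-> u = a) \/
                            (~ ur w /\ forall u, mem u w <-> u = a \/ u = b)) -> D w).
  { intros w [[Hw Hwm]|[Hw Hwm]].
    - destruct (model_singleton a Ha) as [s [Hs [Hsu Hsm]]].
      replace w with s; auto. apply set_ext; auto. intros u. rewrite Hsm, Hwm. tauto.
    - destruct (model_upair a b Ha Hb) as [s [Hs [Hsu Hsm]]].
      replace w with s; auto. apply set_ext; auto. intros u. rewrite Hsm, Hwm. tauto. }
  rewrite (members_relativize z _ Hz Hdom).
  split; intros [Hzu H]; split; auto; intros w Hw; rewrite H, Hcomp by auto; reflexivity.
Qed.

Lemma definable_is_pair i j k : definable (fun e => is_pair (e i) (e j) (e k)).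
Proof.
  apply (definable_reindex (fun e => is_pair (e 0) (e 1) (e 2))
           (fun n => match n with 0 => i | 1 => j | _ => k end)).
  eapply definable_ext; [intros e He; symmetry; apply is_pair_relativize; apply He|].
  definable.
Qed.

Lemma definable_is_pair_param i j k : D k -> definable (fun e => is_pair (e i) (e j) k).
Proof.
  exact (definable_instantiate (fun e => is_pair (e (S i)) (e (S j)) (e 0)) k (definable_is_pair _ _ _)).
Qed.

#[local] Hint Extern 1 => apply definable_is_pair : definable.
#[local] Hint Extern 1 => apply definable_is_pair_param; assumption : definable.

Lemma definable_pair_in i j k : definable (fun e => pair_in (e i) (e j) (e k)).
Proof.
  apply (definable_ext (fun e => exists z, D z /\ mem z (e i) /\ is_pair z (e j) (e k))).
  - intros e He. split.
    + intros [z [_ H]]. exists z. exact H.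
    + intros [z [Hz Hp]]. exists z. split; auto. exact (dom_trans _ z (He i) Hz).
  - definable.
Qed.

#[local] Hint Extern 1 => apply definable_pair_in : definable.

Lemma definable_pair_in_param k i j : D k -> definable (fun e => pair_in k (e i) (e j)).
Proof.
  exact (definable_instantiate (fun e => pair_in (e 0) (e (S i)) (e (S j))) k (definable_pair_in _ _ _)).
Qed.

#[local] Hint Extern 1 => apply definable_pair_in_param; assumption : definable.

(** * Recursion inside the model *)

Section Recursion.
Variable R : U -> U -> Prop.
Variable Step : U -> U -> U -> Prop.

Definition covers u S := forall w, R w u -> exists v, pair_in S w v.
Definition agree_below u S S' :=
  forall w y y', R w u -> pair_in S w y -> pair_in S' w y' -> y = y'.
Definition attempt S :=
  forall z, mem z S -> exists u v, is_pair z u v /\ covers u S /\ Step u S v.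
Definition least_attempt w T :=
  D T /\ attempt T /\ (exists v, pair_in T w v) /\
  forall S, D S -> attempt S -> (exists v, pair_in S w v) -> forall z, mem z T -> mem z S.

Hypothesis R_definable : definable (fun e => R (e 0) (e 1)).
Hypothesis Step_definable : definable (fun e => Step (e 0) (e 1) (e 2)).
Hypothesis R_wf : well_founded R.
Hypothesis R_dom : forall w u, R w u -> D u -> D w.
Hypothesis R_bounded : forall u, D u -> exists c, D c /\ forall w, R w u -> mem w c.
Hypothesis Step_functional : forall u S S' v v', D u -> D S -> D S' -> D v -> D v' ->
  covers u S -> covers u S' -> agree_below u S S' -> Step u S v -> Step u S' v' -> v = v'.
Hypothesis Step_total : forall u S, D u -> D S -> covers u S -> agree_below u S S ->
  exists v, D v /\ Step u S v.

Lemma definable_R i j : definable (fun e => R (e i) (e j)).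
Proof. exact (definable_reindex _ (fun n => match n with 0 => i | _ => j end) R_definable). Qed.

Lemma definable_Step i j k : definable (fun e => Step (e i) (e j) (e k)).
Proof.
  exact (definable_reindex _ (fun n => match n with 0 => i | 1 => j | _ => k end) Step_definable).
Qed.

#[local] Hint Extern 1 => apply definable_R : definable.
#[local] Hint Extern 1 => apply definable_Step : definable.

Lemma definable_covers i j : definable (fun e => covers (e i) (e j)).
Proof.
  apply (definable_ext (fun e => forall w, D w -> R w (e i) -> exists v, D v /\ pair_in (e j) w v)).
  - intros e He. unfold covers. split.
    + intros H w Hw. destruct (H w (R_dom _ _ Hw (He i)) Hw) as [v [_ Hv]]. eauto.
    + intros H w _ Hw. destruct (H w Hw) as [v Hv]. exists v. split; auto.
      exact (proj2 (dom_pair_in_components _ _ _ (He j) Hv)).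
  - definable.
Qed.

#[local] Hint Extern 1 => apply definable_covers : definable.

Lemma definable_attempt i : definable (fun e => attempt (e i)).
Proof.
  apply (definable_ext (fun e => forall z, D z -> mem z (e i) -> exists u, D u /\ exists v, D v /\
           is_pair z u v /\ covers u (e i) /\ Step u (e i) v)).
  - intros e He. unfold attempt. split.
    + intros H z Hz. destruct (H z (dom_trans _ _ (He i) Hz) Hz) as [u [_ [v [_ Hv]]]]. eauto.
    + intros H z _ Hz. destruct (H z Hz) as [u [v [Hp Hv]]].
      destruct (dom_pair_components z u v (dom_trans _ _ (He i) Hz) Hp).
      exists u. split; auto. exists v. auto.
  - definable.
Qed.

#[local] Hint Extern 1 => apply definable_attempt : definable.

Lemma definable_least_attempt i j : definable (fun e => least_attempt (e i) (e j)).
Proof.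
  apply (definable_ext (fun e => attempt (e j) /\ (exists v, D v /\ pair_in (e j) (e i) v) /\
           forall S, D S -> attempt S -> (exists v, D v /\ pair_in S (e i) v) ->
             forall z, D z -> mem z (e j) -> mem z S)).
  - intros e He. unfold least_attempt.
    assert (Hdom : forall S, D S -> (exists v, pair_in S (e i) v) <-> (exists v, D v /\ pair_in S (e i) v)).
    { intros S HS. split; [|intros [v [_ Hv]]; eauto].
      intros [v Hv]. exists v. split; auto. exact (proj2 (dom_pair_in_components _ _ _ HS Hv)). }
    split.
    + intros [H1 [H2 H3]]. split; [apply He|]. split; [auto|]. split; [apply Hdom; auto|].
      intros S HS HSa HSw z Hz. apply (H3 S HS HSa); [apply Hdom|exact (dom_trans _ _ (He j) Hz)|]; auto.
    + intros [_ [H1 [H2 H3]]]. split; [auto|]. split; [apply Hdom; auto|].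
      intros S HS HSa HSw z _ Hz. apply (H3 S HS HSa); [apply Hdom|]; auto.
  - definable.
Qed.

#[local] Hint Extern 1 => apply definable_least_attempt : definable.

Lemma attempt_value S x v : D S -> attempt S -> pair_in S x v ->
  D v /\ covers x S /\ Step x S v.
Proof.
  intros HS HSa Hxv. pose proof Hxv as [z [Hz Hp]].
  destruct (HSa z Hz) as [u [v' [Hp' [Hc Hst]]]].
  destruct (is_pair_inj _ _ _ _ _ Hp Hp') as [<- <-].
  split; auto. exact (proj2 (dom_pair_in_components _ _ _ HS Hxv)).
Qed.

Lemma attempt_functional u S S' v v' : D S -> D S' -> attempt S -> attempt S' ->
  pair_in S u v -> pair_in S' u v' -> v = v'.
Proof.
  revert S S' v v'. induction u as [u IH] using (well_founded_ind R_wf).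
  intros S S' v v' HS HS' HSa HS'a Hv Hv'.
  destruct (attempt_value S u v HS HSa Hv) as [Dv [Hc Hst]].
  destruct (attempt_value S' u v' HS' HS'a Hv') as [Dv' [Hc' Hst']].
  apply (Step_functional u S S' v v'); auto.
  - exact (proj1 (dom_pair_in_components _ _ _ HS Hv)).
  - intros w y y' Hw Hy Hy'. exact (IH w Hw S S' y y' HS HS' HSa HS'a Hy Hy').
Qed.

Lemma step_transfer u S T v : D u -> D S -> D T -> D v ->
  covers u S -> covers u T -> agree_below u T T -> agree_below u T S ->
  Step u S v -> Step u T v.
Proof.
  intros Du DS DT Dv HcS HcT HTT HTS Hst.
  destruct (Step_total u T Du DT HcT HTT) as [v' [Dv' Hst']].
  replace v with v'; auto. apply (Step_functional u T S v' v); auto.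
Qed.

Lemma attempt_union S : D S ->
  (forall z, mem z S -> exists T, D T /\ attempt T /\ mem z T /\ forall z', mem z' T -> mem z' S) ->
  attempt S.
Proof.
  intros HS Hcov.
  assert (Hfun : forall T w y y', D T -> attempt T -> pair_in S w y -> pair_in T w y' -> y = y').
  { intros T w y y' HT HTa [z [Hz Hp]] Hy'. destruct (Hcov z Hz) as [T' [HT' [HT'a [HzT' _]]]].
    apply (attempt_functional w T' T y y'); auto. exists z; auto. }
  intros z Hz. destruct (Hcov z Hz) as [T [HT [HTa [HzT HTS]]]].
  destruct (HTa z HzT) as [u [v [Hp [Hc Hst]]]]. exists u, v. split; auto.
  destruct (dom_pair_components z u v (dom_trans _ _ HT HzT) Hp) as [Du Dv].
  assert (HcS : covers u S).
  { intros w Hw. destruct (Hc w Hw) as [y Hy]. exists y. eapply pair_in_mono; eauto. }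
  split; auto. apply (step_transfer u T S v); auto.
  - intros w y y' _ Hy Hy'. destruct Hy' as [z' [Hz' Hp']].
    destruct (Hcov z' Hz') as [T' [HT' [HT'a [Hz'T' _]]]].
    apply (Hfun T' w y y'); auto. exists z'; auto.
  - intros w y y' _ Hy Hy'. apply (Hfun T w y y'); auto.
Qed.

Lemma attempt_down_closed S T : D S -> D T -> attempt S -> (forall z, mem z T -> mem z S) ->
  (forall z u v w y z', mem z T -> is_pair z u v -> R w u -> mem z' S -> is_pair z' w y ->
     mem z' T) ->
  attempt T.
Proof.
  intros HS HT HSa HTS Hclosed z Hz.
  destruct (HSa z (HTS z Hz)) as [u [v [Hp [Hc Hst]]]]. exists u, v. split; auto.
  destruct (dom_pair_components z u v (dom_trans _ _ HS (HTS z Hz)) Hp) as [Du Dv].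
  assert (HcT : covers u T).
  { intros w Hw. destruct (Hc w Hw) as [y [z' [Hz' Hp']]]. exists y, z'. split; eauto. }
  assert (Hagree : forall w y y', pair_in T w y -> pair_in S w y' -> y = y').
  { intros w y y' Hy Hy'. apply (attempt_functional w S S); auto. eapply pair_in_mono; eauto. }
  split; auto. apply (step_transfer u S T v); auto; intros w y y' _ Hy Hy'; apply (Hagree w); auto.
  eapply pair_in_mono; eauto.
Qed.

Lemma least_attempt_unique w T T' : least_attempt w T -> least_attempt w T' -> T = T'.
Proof.
  intros [HT [HTa [HTw HTmin]]] [HT' [HT'a [HT'w HT'min]]].
  assert (Hset : forall S, (exists v, pair_in S w v) -> ~ ur S).
  { intros S [v [z [Hz _]]] Hu. exact (ur_no_mem _ _ Hu Hz). }
  apply set_ext; auto. intros y. split; intros Hy; [apply (HTmin T') | apply (HT'min T)]; auto.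
Qed.

Lemma least_attempt_exists w : D w -> (exists S, D S /\ attempt S /\ exists v, pair_in S w v) ->
  exists T, least_attempt w T.
Proof.
  intros Hw [S0 [HS0 [HS0a [v0 Hv0]]]].
  destruct (model_sep (fun z => forall S, D S -> attempt S -> (exists v, D v /\ pair_in S w v) ->
                                  mem z S) S0) as [T [HT [_ HTm]]]; auto.
  { apply (definable_instantiate (fun e => forall S, D S -> attempt S ->
             (exists v, D v /\ pair_in S (e 0) v) -> mem (e 1) S) w); auto.
    definable. }
  assert (HTm' : forall z, mem z T <->
            mem z S0 /\ forall S, D S -> attempt S -> (exists v, pair_in S w v) -> mem z S).
  { intros z. rewrite HTm. split; intros [Hz H]; split; auto; intros S HS HSa [v Hv];
      apply H; auto; exists v; [split|]; auto.
    - exact (proj2 (dom_pair_in_components _ _ _ HS Hv)).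
    - apply Hv. }
  assert (HTS0 : forall z, mem z T -> mem z S0) by (intros z Hz; exact (proj1 (proj1 (HTm' z) Hz))).
  assert (Hin_T : forall u y z, is_pair z u y -> mem z S0 ->
            (forall S, D S -> attempt S -> (exists v, pair_in S w v) -> exists y', pair_in S u y') ->
            mem z T).
  { intros u y z Hp Hz Hdef. apply HTm'. split; auto. intros S HS HSa HSw.
    destruct (Hdef S HS HSa HSw) as [y' [z' [Hz' Hp']]].
    assert (y = y') as <-.
    { apply (attempt_functional u S0 S); auto; [exists z | exists z']; auto. }
    rewrite (is_pair_unique _ _ _ _ Hp Hp'). exact Hz'. }
  assert (HTa : attempt T).
  { apply (attempt_down_closed S0 T); auto.
    intros z u v w' y z' Hz Hp Hw' Hz' Hp'. apply (Hin_T w' y z' Hp' Hz').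
    intros S HS HSa HSw. assert (HzS : mem z S) by (apply HTm' in Hz; apply Hz; auto).
    destruct (HSa z HzS) as [u' [v' [Hp'' [Hc' _]]]].
    destruct (is_pair_inj _ _ _ _ _ Hp Hp'') as [<- _]. exact (Hc' w' Hw'). }
  exists T. split; [|split; [|split]]; auto.
  - exists v0. destruct Hv0 as [z0 [Hz0 Hp0]]. exists z0. split; auto.
    apply (Hin_T w v0 z0 Hp0 Hz0). auto.
  - intros S HS HSa HSw z Hz. apply HTm' in Hz. apply Hz; auto.
Qed.

Lemma attempt_below x : D x ->
  (forall w, R w x -> exists S, D S /\ attempt S /\ exists v, pair_in S w v) ->
  exists S, D S /\ attempt S /\ covers x S.
Proof.
  intros Hx Hpred. destruct (R_bounded x Hx) as [c [Hc Hcx]].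
  assert (Hleast : forall w, R w x -> exists T, least_attempt w T).
  { intros w Hw. apply least_attempt_exists; auto. exact (R_dom _ _ Hw Hx). }
  (* Replacement needs a value at every element of [c], not only at the
     predecessors of [x]. *)
  destruct (model_repl (fun w T => (R w x /\ least_attempt w T) \/ (~ R w x /\ T = w)) c)
    as [b [Hb Hbm]]; auto.
  { apply (definable_instantiate (fun e => (R (e 1) (e 0) /\ least_attempt (e 1) (e 2)) \/
                                           (~ R (e 1) (e 0) /\ e 2 = e 1)) x); auto.
    definable. }
  { intros w Hw _. destruct (classic (R w x)) as [Hr|Hr].
    - destruct (Hleast w Hr) as [T HT]. exists T. split; [exact (proj1 HT)|]. split; [left; auto|].
      intros T' _ [[_ HT']|[Hn _]]; [exact (least_attempt_unique w T' T HT' HT) | contradiction].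
    - exists w. split; auto. split; [right; auto|].
      intros T' _ [[Hr' _]|[_ ->]]; [contradiction | reflexivity]. }
  destruct (model_union b Hb) as [A [HA HAm]].
  assert (HinA : forall w T z, R w x -> least_attempt w T -> mem z T -> mem z A).
  { intros w T z Hr HT Hz. destruct (Hbm w (Hcx w Hr)) as [T' [HT'b [[_ HT']|[Hn _]]]];
      [|contradiction].
    rewrite (least_attempt_unique w T' T HT' HT) in HT'b. exact (HAm T z Hz HT'b). }
  destruct (model_sep (fun z => exists w, D w /\ exists T, D T /\
                                  R w x /\ least_attempt w T /\ mem z T) A)
    as [S [HS [_ HSm]]]; auto.
  { apply (definable_instantiate (fun e => exists w, D w /\ exists T, D T /\
             R w (e 0) /\ least_attempt w T /\ mem (e 1) T) x); auto.
    definable. }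
  assert (HSm' : forall z, mem z S <-> exists w T, R w x /\ least_attempt w T /\ mem z T).
  { intros z. rewrite HSm. split.
    - intros [_ [w [_ [T [_ H]]]]]. eauto.
    - intros [w [T [Hr [HT Hz]]]]. split; [eapply HinA; eauto|].
      exists w. split; [exact (R_dom _ _ Hr Hx)|]. exists T. split; [exact (proj1 HT)|]. auto. }
  exists S. split; [|split]; auto.
  - apply attempt_union; auto. intros z Hz.
    apply HSm' in Hz as [w [T [Hr [HT Hz]]]].
    exists T. split; [exact (proj1 HT)|]. split; [exact (proj1 (proj2 HT))|]. split; auto.
    intros z' Hz'. apply HSm'. eauto.
  - intros w Hr. destruct (Hleast w Hr) as [T HT].
    destruct (proj1 (proj2 (proj2 HT))) as [v Hv]. exists v.
    eapply pair_in_mono; [exact Hv|]. intros z Hz. apply HSm'. eauto.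
Qed.

Lemma attempt_extend x S : D x -> D S -> attempt S -> covers x S ->
  exists S', D S' /\ attempt S' /\ exists v, pair_in S' x v.
Proof.
  intros Hx HS HSa Hc. destruct (classic (exists v, pair_in S x v)) as [Hin|Hnin]; [eauto|].
  assert (Hnot_below : forall u v, pair_in S u v -> ~ R x u).
  { intros u v Huv Hr. apply Hnin. exact (proj1 (proj2 (attempt_value S u v HS HSa Huv)) x Hr). }
  assert (HSS : agree_below x S S).
  { intros w y y' _ Hy Hy'. exact (attempt_functional w S S y y' HS HS HSa HSa Hy Hy'). }
  destruct (Step_total x S Hx HS Hc HSS) as [v [Hv Hst]].
  destruct (model_pair x v Hx Hv) as [z0 [Hz0 Hp0]].
  destruct (model_insert S z0 HS Hz0) as [S' [HS' HS'm]].
  assert (Hsub : forall z, mem z S -> mem z S') by (intros z Hz; apply HS'm; auto).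
  assert (Hnew : forall w y, pair_in S' w y -> pair_in S w y \/ (w = x /\ y = v)).
  { intros w y [z [Hz Hp]]. apply HS'm in Hz as [Hz | ->]; [left; exists z; auto|].
    right. destruct (is_pair_inj _ _ _ _ _ Hp Hp0) as [-> ->]. auto. }
  assert (Hagree : forall u, ~ R x u -> agree_below u S' S' /\ agree_below u S' S).
  { intros u Hxu. split; intros w y y' Hw Hy Hy';
      destruct (Hnew w y Hy) as [Hy1 | [-> _]]; try contradiction.
    - destruct (Hnew w y' Hy') as [Hy1' | [-> _]]; [|contradiction].
      exact (attempt_functional w S S y y' HS HS HSa HSa Hy1 Hy1').
    - exact (attempt_functional w S S y y' HS HS HSa HSa Hy1 Hy'). }
  assert (Hcover : forall u, covers u S -> covers u S').
  { intros u Hu w Hw. destruct (Hu w Hw) as [y Hy]. exists y. eapply pair_in_mono; eauto. }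
  exists S'. split; [|split]; auto.
  - intros z Hz. apply HS'm in Hz as [Hz | ->].
    + destruct (HSa z Hz) as [u [v' [Hp [Hcu Hst']]]]. exists u, v'. split; auto.
      destruct (dom_pair_components z u v' (dom_trans _ _ HS Hz) Hp) as [Du Dv'].
      assert (Hxu : ~ R x u) by (apply (Hnot_below u v'); exists z; auto).
      split; [auto|]. apply (step_transfer u S S' v'); auto; apply Hagree; auto.
    + exists x, v. split; auto.
      assert (Hxx : ~ R x x) by (intros Hr; apply Hnin; exact (Hc x Hr)).
      split; [auto|]. apply (step_transfer x S S' v); auto; apply Hagree; auto.
  - exists v, z0. split; auto. apply HS'm. auto.
Qed.

Lemma attempt_total x : D x -> exists S, D S /\ attempt S /\ exists v, pair_in S x v.
Proof.
  induction x as [x IH] using (well_founded_ind R_wf). intros Hx.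
  assert (Hbelow : forall w, R w x -> exists S, D S /\ attempt S /\ exists v, pair_in S w v).
  { intros w Hw. apply IH; auto. exact (R_dom _ _ Hw Hx). }
  destruct (attempt_below x Hx Hbelow) as [S [HS [HSa Hc]]].
  exact (attempt_extend x S Hx HS HSa Hc).
Qed.

End Recursion.

(** * Translating names *)

Section Names.
Variables P le one G : U.
Hypothesis HPm : mem P m.
Hypothesis Hlem : mem le m.
Hypothesis Honem : mem one m.
Hypothesis HP : forcing_poset mem ur P le one.
Hypothesis HG : generic mem ur P le one m G.

Notation leP := (leP mem ur le).
Notation compatible := (compatible mem ur P le).
Notation old_name := (old_name mem ur P).
Notation new_name := (new_name mem ur P le).
Notation old_eval := (old_eval mem ur G).
Notation new_eval := (new_eval mem ur P le G).

Lemma dom_condition p : mem p P -> D p.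
Proof. exact (dom_trans P p HPm). Qed.

Lemma le_refl p : mem p P -> leP p p.
Proof. destruct HP as [_ [_ [_ [_ [H _]]]]]. auto. Qed.

Lemma le_trans p q r : mem p P -> mem q P -> mem r P -> leP p q -> leP q r -> leP p r.
Proof. destruct HP as [_ [_ [_ [_ [_ [H _]]]]]]. eauto. Qed.

Lemma one_condition : mem one P.
Proof. apply HP. Qed.

Lemma generic_filter : filter mem ur P le one G.
Proof. apply HG. Qed.

Lemma generic_sub p : mem p G -> mem p P.
Proof. apply generic_filter. Qed.

Lemma generic_one : mem one G.
Proof. apply generic_filter. Qed.

Lemma generic_up p q : mem p G -> mem q P -> leP p q -> mem q G.
Proof. destruct generic_filter as [_ [_ [H _]]]. eauto. Qed.

Lemma generic_directed p q : mem p G -> mem q G -> exists r, mem r G /\ leP r p /\ leP r q.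
Proof. destruct generic_filter as [_ [_ [_ H]]]. eauto. Qed.

Lemma generic_compatible p q : mem p G -> mem q G -> compatible p q.
Proof.
  intros Hp Hq. destruct (generic_directed p q Hp Hq) as [r [Hr H]].
  exists r. split; auto. apply generic_sub; auto.
Qed.

Lemma definable_leP i j : definable (fun e => leP (e i) (e j)).
Proof. exact (definable_instantiate (fun e => pair_in (e 0) (e (S i)) (e (S j))) le (definable_pair_in _ _ _) Hlem). Qed.

#[local] Hint Extern 1 => apply definable_leP : definable.

Lemma definable_compatible i j : definable (fun e => compatible (e i) (e j)).
Proof.
  apply (definable_ext (fun e => exists r, D r /\ mem r P /\ leP r (e i) /\ leP r (e j))).
  - intros e He. unfold Defs.compatible. split.
    + intros [r [_ H]]. eauto.
    + intros [r H]. exists r. split; auto. apply dom_condition, H.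
  - definable.
Qed.

#[local] Hint Extern 1 => apply definable_compatible : definable.

Definition name_child w u := exists p, pair_in u w p.

Lemma definable_name_child : definable (fun e => name_child (e 0) (e 1)).
Proof.
  apply (definable_ext (fun e => exists p, D p /\ pair_in (e 1) (e 0) p)).
  - intros e He. unfold name_child. split.
    + intros [p [_ H]]. eauto.
    + intros [p H]. exists p. split; auto. exact (proj2 (dom_pair_in_components _ _ _ (He 1) H)).
  - definable.
Qed.

Lemma name_child_wf : well_founded name_child.
Proof.
  apply (wf_incl _ _ (clos_trans U mem)).
  - intros w u [p [z [Hz Hp]]]. destruct (is_pair_members z w p Hp) as [s [_ [Hsz [Hws _]]]].
    apply t_trans with s; [apply t_step; auto|].
    apply t_trans with z; apply t_step; auto.
  - apply wf_clos_trans, (amb_wf _ _ HV).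
Qed.

Lemma name_child_dom w u : name_child w u -> D u -> D w.
Proof. intros [p H] Hu. exact (proj1 (dom_pair_in_components _ _ _ Hu H)). Qed.

Lemma name_child_bounded u : D u -> exists c, D c /\ forall w, name_child w u -> mem w c.
Proof.
  intros Hu. destruct (model_union_union u Hu) as [c [Hc H]]. exists c. split; auto.
  intros w [p Hp]. exact (proj1 (pair_in_union_union _ _ _ _ H Hp)).
Qed.

Lemma old_name_pair t w p : old_name t -> ~ ur t -> pair_in t w p -> old_name w /\ mem p P.
Proof.
  intros Ht Htu [z [Hz Hp]]. destruct Ht as [a Ha | t _ Hmem]; [contradiction|].
  destruct (Hmem z Hz) as [s [p' [Hp' [Hs HpP]]]].
  destruct (is_pair_inj _ _ _ _ _ Hp Hp') as [<- <-]. auto.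
Qed.

Lemma new_name_not_ur x : new_name x -> ~ ur x.
Proof. intros H. destruct H; auto. Qed.

Lemma new_name_pair x y p : new_name x -> pair_in x y p -> mem p P /\ (new_name y \/ ur y).
Proof.
  intros Hx [z [Hz Hp]]. destruct Hx as [x _ Hmem _].
  destruct (Hmem z Hz) as [y' [p' [Hp' [HpP Hy]]]].
  destruct (is_pair_inj _ _ _ _ _ Hp Hp') as [<- <-]. auto.
Qed.

Lemma new_name_incompatible x a p y q : new_name x -> ur a -> pair_in x a p ->
  pair_in x y q -> a <> y -> ~ compatible p q.
Proof. intros Hx. destruct Hx as [x _ _ Hinc]. eauto. Qed.

Lemma old_eval_cases t x : old_eval t x ->
  (ur t /\ x = t) \/
  (~ ur t /\ ~ ur x /\
   (forall z, mem z x -> exists w p, pair_in t w p /\ mem p G /\ old_eval w z) /\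
   (forall w p, pair_in t w p -> mem p G -> exists z, mem z x /\ old_eval w z)).
Proof. intros H. destruct H; [left | right]; auto. Qed.

Lemma new_eval_cases x v : new_eval x v ->
  (exists a p, ur a /\ pair_in x a p /\ mem p G /\ v = a) \/
  (~ (exists a p, ur a /\ pair_in x a p /\ mem p G) /\ ~ ur v /\
   (forall z, mem z v -> exists y p, pair_in x y p /\ new_name y /\ mem p G /\ new_eval y z) /\
   (forall y p, pair_in x y p -> new_name y -> mem p G -> exists z, mem z v /\ new_eval y z)).
Proof. intros H. destruct H; [left; exists a, p | right]; auto. Qed.

(** ** Old names as new names *)

Definition old_child_image t S z := exists w, D w /\ exists p, D p /\ exists y, D y /\
  pair_in t w p /\ pair_in S w y /\ is_pair z y p.

Definition new_of_old t S s :=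
  (ur t /\ ~ ur s /\ forall z, D z -> (mem z s <-> is_pair z t one)) \/
  (~ ur t /\ ~ ur s /\ forall z, D z -> (mem z s <-> old_child_image t S z)).

Lemma definable_new_of_old : definable (fun e => new_of_old (e 0) (e 1) (e 2)).
Proof. unfold new_of_old, old_child_image. definable. Qed.

Lemma old_child_image_transfer t S S' z : covers name_child t S' ->
  agree_below name_child t S S' -> old_child_image t S z -> old_child_image t S' z.
Proof.
  intros Hc Hag [w [Dw [p [Dp [y [Dy [Htw [HSw Hz]]]]]]]].
  exists w. split; auto. exists p. split; auto. exists y. split; auto. split; auto. split; auto.
  destruct (Hc w (ex_intro _ p Htw)) as [y' Hy']. rewrite (Hag w y y' (ex_intro _ p Htw) HSw Hy').
  exact Hy'.
Qed.

Lemma new_of_old_functional t S S' s s' : D t -> D S -> D S' -> D s -> D s' ->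
  covers name_child t S -> covers name_child t S' -> agree_below name_child t S S' ->
  new_of_old t S s -> new_of_old t S' s' -> s = s'.
Proof.
  intros Dt DS DS' Ds Ds' Hc Hc' Hag [[Ht [Hs Hsm]]|[Ht [Hs Hsm]]] [[Ht' [Hs' Hsm']]|[Ht' [Hs' Hsm']]];
    try contradiction; apply set_ext_dom; auto; intros z Dz; rewrite Hsm, Hsm' by auto.
  - reflexivity.
  - split; apply old_child_image_transfer; auto.
    intros w y y' Hw Hy Hy'. symmetry. exact (Hag w y' y Hw Hy' Hy).
Qed.

Lemma new_of_old_total t S : D t -> D S -> exists s, D s /\ new_of_old t S s.
Proof.
  intros Dt DS. destruct (classic (ur t)) as [Ht|Ht].
  - destruct (model_pair t one Dt Honem) as [z0 [Dz0 Hz0]].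
    destruct (model_singleton z0 Dz0) as [s [Ds [Hsu Hsm]]]. exists s. split; auto. left.
    split; auto. split; auto. intros z Dz. rewrite Hsm. split.
    + intros ->. auto.
    + intros Hz. exact (is_pair_unique _ _ _ _ Hz Hz0).
  - destruct (model_union_union S DS) as [A [DA HA]].
    destruct (model_union_union t Dt) as [B [DB HB]].
    destruct (model_union2 A B DA DB) as [X [DX [HAX HBX]]].
    destruct (model_pairs_of X DX) as [C [DC HC]].
    destruct (model_sep (old_child_image t S) C) as [s [Ds [Hsu Hsm]]]; auto.
    { unfold old_child_image. definable. }
    exists s. split; auto. right. split; auto. split; auto. intros z Dz. rewrite Hsm.
    split; [tauto|]. intros Hz. split; auto.
    destruct Hz as [w [Dw [p [Dp [y [Dy [Htw [HSw Hz]]]]]]]].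
    apply (HC z y p Dz Hz).
    + apply HAX. exact (proj2 (pair_in_union_union _ _ _ _ HA HSw)).
    + apply HBX. exact (proj2 (pair_in_union_union _ _ _ _ HB Htw)).
Qed.

Notation old_attempt := (attempt name_child new_of_old).

Lemma old_attempt_total t : D t -> exists S, D S /\ old_attempt S /\ exists s, pair_in S t s.
Proof.
  apply attempt_total.
  - exact definable_name_child.
  - exact definable_new_of_old.
  - exact name_child_wf.
  - exact name_child_dom.
  - exact name_child_bounded.
  - exact new_of_old_functional.
  - intros t' S Dt DS _ _. exact (new_of_old_total t' S Dt DS).
Qed.

Lemma new_of_old_name t : D t -> old_name t ->
  forall S s, D S -> old_attempt S -> pair_in S t s -> new_name s.
Proof.
  induction t as [t IH] using (well_founded_ind name_child_wf). intros Dt Ht S s DS HSa Hts.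
  destruct (attempt_value _ _ S t s DS HSa Hts) as [Ds [_ [[Htu [Hsu Hsm]]|[Htu [Hsu Hsm]]]]].
  - assert (Hsm' : forall z, mem z s -> is_pair z t one)
      by (intros z Hz; apply Hsm; [exact (dom_trans s z Ds Hz) | exact Hz]).
    constructor; auto.
    + intros z Hz. exists t, one. split; [auto|]. split; [exact one_condition | right; auto].
    + intros a p y q _ [z1 [Hz1 Hp1]] [z2 [Hz2 Hp2]] Hay. exfalso. apply Hay.
      destruct (is_pair_inj _ _ _ _ _ Hp1 (Hsm' z1 Hz1)) as [-> _].
      destruct (is_pair_inj _ _ _ _ _ Hp2 (Hsm' z2 Hz2)) as [-> _]. reflexivity.
  - assert (Hmem : forall z, mem z s -> exists p y, is_pair z y p /\ new_name y /\ mem p P).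
    { intros z Hz. apply Hsm in Hz; [|exact (dom_trans s z Ds Hz)].
      destruct Hz as [w [Dw [p [_ [y [_ [Htw [HSw Hz]]]]]]]].
      destruct (old_name_pair t w p Ht Htu Htw) as [Hw HpP].
      exists p, y. split; [|split]; auto. exact (IH w (ex_intro _ p Htw) Dw Hw S y DS HSa HSw). }
    constructor; auto.
    + intros z Hz. destruct (Hmem z Hz) as [p [y [Hp [Hy HpP]]]]. exists y, p. auto.
    + intros a p y q Ha [z [Hz Hp]]. exfalso. destruct (Hmem z Hz) as [p' [y' [Hp' [Hy' _]]]].
      destruct (is_pair_inj _ _ _ _ _ Hp Hp') as [-> _]. exact (new_name_not_ur y' Hy' Ha).
Qed.

Lemma new_of_old_eval t : D t -> old_name t ->
  forall S s, D S -> old_attempt S -> pair_in S t s -> forall x, old_eval t x -> new_eval s x.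
Proof.
  induction t as [t IH] using (well_founded_ind name_child_wf). intros Dt Ht S s DS HSa Hts x Hx.
  destruct (attempt_value _ _ S t s DS HSa Hts) as [Ds [Hc [[Htu [Hsu Hsm]]|[Htu [Hsu Hsm]]]]];
    destruct (old_eval_cases t x Hx) as [[Htu' ->]|[Htu' [Hxu [Hsub Hsup]]]]; try contradiction.
  - destruct (model_pair t one Dt Honem) as [z0 [Dz0 Hz0]].
    apply (new_eval_ur _ _ _ _ _ s t one); auto; [|exact generic_one].
    exists z0. split; auto. apply Hsm; auto.
  - assert (Hchild : forall w p y, pair_in t w p -> pair_in S w y ->
              new_name y /\ forall z, old_eval w z -> new_eval y z).
    { intros w p y Htw HSw. destruct (dom_pair_in_components t w p Dt Htw) as [Dw _].
      destruct (old_name_pair t w p Ht Htu Htw) as [Hw _]. split.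
      - exact (new_of_old_name w Dw Hw S y DS HSa HSw).
      - exact (IH w (ex_intro _ p Htw) Dw Hw S y DS HSa HSw). }
    assert (Hmem : forall y p, pair_in s y p -> exists w, pair_in t w p /\ pair_in S w y).
    { intros y p [z [Hz Hp]]. apply Hsm in Hz; [|exact (dom_trans s z Ds Hz)].
      destruct Hz as [w [_ [p' [_ [y' [_ [Htw [HSw Hp']]]]]]]].
      destruct (is_pair_inj _ _ _ _ _ Hp Hp') as [<- <-]. eauto. }
    apply new_eval_set; auto.
    + intros [a [p [Ha [Hap _]]]]. destruct (Hmem a p Hap) as [w [Htw HSw]].
      exact (new_name_not_ur a (proj1 (Hchild w p a Htw HSw)) Ha).
    + intros z Hz. destruct (Hsub z Hz) as [w [p [Htw [HpG Hwz]]]].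
      destruct (Hc w (ex_intro _ p Htw)) as [y HSw].
      destruct (dom_pair_in_components t w p Dt Htw) as [Dw Dp].
      destruct (dom_pair_in_components S w y DS HSw) as [_ Dy].
      destruct (Hchild w p y Htw HSw) as [Hy Hyz].
      exists y, p. split; [|split; [|split]]; auto.
      destruct (model_pair y p Dy Dp) as [z1 [Dz1 Hz1]]. exists z1. split; auto.
      apply Hsm; auto. exists w. split; auto. exists p. split; auto. exists y. auto.
    + intros y p Hyp _ HpG. destruct (Hmem y p Hyp) as [w [Htw HSw]].
      destruct (Hsup w p Htw HpG) as [z [Hz Hwz]].
      exists z. split; auto. exact (proj2 (Hchild w p y Htw HSw) z Hwz).
Qed.

(** ** New names as old names *)

(* The two disjuncts give the pairs [(a, r)] and [(y°, r)] of [x°]. *)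
Definition new_child_image u S z :=
  (exists y, D y /\ exists p, D p /\ exists a, D a /\ exists q, D q /\ exists r, D r /\
     pair_in u y p /\ ur a /\ pair_in y a q /\ mem r P /\ leP r p /\ leP r q /\ is_pair z a r) \/
  (exists y, D y /\ exists p, D p /\ exists y', D y' /\ exists r, D r /\
     pair_in u y p /\ ~ ur y /\ pair_in S y y' /\ mem r P /\ leP r p /\
     (forall a, D a -> forall q, D q -> ur a -> pair_in y a q -> ~ compatible r q) /\
     is_pair z y' r).

Definition old_of_new u S v :=
  (ur u /\ v = u) \/ (~ ur u /\ ~ ur v /\ forall z, D z -> (mem z v <-> new_child_image u S z)).

Lemma definable_old_of_new : definable (fun e => old_of_new (e 0) (e 1) (e 2)).
Proof. unfold old_of_new, new_child_image. definable. Qed.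

Lemma new_child_image_transfer u S S' z : covers name_child u S' ->
  agree_below name_child u S S' -> new_child_image u S z -> new_child_image u S' z.
Proof.
  intros Hc Hag [H|H]; [left; exact H | right].
  destruct H as [y [Dy [p [Dp [y' [Dy' [r [Dr [Huy [Hyu [HSy H]]]]]]]]]]].
  exists y. split; auto. exists p. split; auto. exists y'. split; auto. exists r. split; auto.
  split; auto. split; auto. split; auto.
  destruct (Hc y (ex_intro _ p Huy)) as [y'' Hy'']. rewrite (Hag y y' y'' (ex_intro _ p Huy) HSy Hy'').
  exact Hy''.
Qed.

Lemma old_of_new_functional u S S' v v' : D u -> D S -> D S' -> D v -> D v' ->
  covers name_child u S -> covers name_child u S' -> agree_below name_child u S S' ->
  old_of_new u S v -> old_of_new u S' v' -> v = v'.
Proof.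
  intros Du DS DS' Dv Dv' Hc Hc' Hag [[Hu ->]|[Hu [Hv Hvm]]] [[Hu' ->]|[Hu' [Hv' Hvm']]];
    try contradiction; auto.
  apply set_ext_dom; auto. intros z Dz. rewrite Hvm, Hvm' by auto.
  split; apply new_child_image_transfer; auto.
  intros w y y' Hw Hy Hy'. symmetry. exact (Hag w y' y Hw Hy' Hy).
Qed.

Lemma old_of_new_total u S : D u -> D S -> exists v, D v /\ old_of_new u S v.
Proof.
  intros Du DS. destruct (classic (ur u)) as [Hu|Hu]; [exists u; split; [auto | left; auto]|].
  destruct (model_union_union S DS) as [A [DA HA]].
  destruct (model_union_union u Du) as [B [DB HB]].
  destruct (model_union_union B DB) as [B' [DB' HB']].
  destruct (model_union B' DB') as [B'' [DB'' HB'']].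
  destruct (model_union2 A B'' DA DB'') as [X1 [DX1 [HAX HBX]]].
  destruct (model_union2 X1 P DX1 HPm) as [X [DX [HX1X HPX]]].
  destruct (model_pairs_of X DX) as [C [DC HC]].
  destruct (model_sep (new_child_image u S) C) as [v [Dv [Hvu Hvm]]]; auto.
  { unfold new_child_image. definable. }
  exists v. split; auto. right. split; auto. split; auto. intros z Dz. rewrite Hvm.
  split; [tauto|]. intros Hz. split; auto.
  destruct Hz as [H|H].
  - destruct H as [y [_ [p [_ [a [_ [q [_ [r [_ [Huy [_ [[z' [Hz' Hp']] [HrP [_ [_ Hz]]]]]]]]]]]]]]]].
    apply (HC z a r Dz Hz); auto.
    apply HX1X, HBX. destruct (is_pair_members z' a q Hp') as [s [_ [Hsz' [Has _]]]].
    apply (HB'' s a Has). apply (HB' y z' s); auto.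
    exact (proj1 (pair_in_union_union _ _ _ _ HB Huy)).
  - destruct H as [y [_ [p [_ [y' [_ [r [_ [_ [_ [HSy [HrP [_ [_ Hz]]]]]]]]]]]]]].
    apply (HC z y' r Dz Hz); auto.
    apply HX1X, HAX. exact (proj2 (pair_in_union_union _ _ _ _ HA HSy)).
Qed.

Notation new_attempt := (attempt name_child old_of_new).

Lemma new_attempt_total u : D u -> exists S, D S /\ new_attempt S /\ exists g, pair_in S u g.
Proof.
  apply attempt_total.
  - exact definable_name_child.
  - exact definable_old_of_new.
  - exact name_child_wf.
  - exact name_child_dom.
  - exact name_child_bounded.
  - exact old_of_new_functional.
  - intros u' S Du DS _ _. exact (old_of_new_total u' S Du DS).
Qed.

Lemma generic_decides_urelement y p : D y -> new_name y -> mem p G ->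
  ~ (exists a q, ur a /\ pair_in y a q /\ mem q G) ->
  exists r, mem r G /\ leP r p /\ forall a q, ur a -> pair_in y a q -> ~ compatible r q.
Proof.
  intros Dy Hy HpG Hno.
  destruct (model_sep (fun r => (exists a, D a /\ exists q, D q /\ ur a /\ pair_in y a q /\ leP r q) \/
              (forall a, D a -> forall q, D q -> ur a -> pair_in y a q -> ~ compatible r q)) P)
    as [E [DE [_ HEm]]]; auto.
  { definable. }
  assert (HEdense : dense mem ur P le E).
  { split; [intros r Hr; apply HEm, Hr|]. intros p0 Hp0.
    destruct (classic (exists a q, ur a /\ pair_in y a q /\ compatible p0 q))
      as [[a [q [Ha [Hyaq [r [HrP [Hrp0 Hrq]]]]]]]|Hn].
    - exists r. split; auto. apply HEm. split; auto. left.
      destruct (dom_pair_in_components y a q Dy Hyaq) as [Da Dq].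
      exists a. split; auto. exists q. auto.
    - exists p0. split; [|apply le_refl; auto]. apply HEm. split; auto. right.
      intros a _ q _ Ha Hyaq Hc. apply Hn. eauto. }
  destruct HG as [_ Hgen]. destruct (Hgen E DE HEdense) as [r0 [Hr0 Hr0G]].
  apply HEm in Hr0 as [Hr0P [[a [_ [q [_ [Ha [Hyaq Hle]]]]]]|Hinc]].
  - exfalso. apply Hno. exists a, q. split; [|split]; auto.
    apply (generic_up r0 q); auto. exact (proj1 (new_name_pair y a q Hy Hyaq)).
  - destruct (generic_directed p r0 HpG Hr0G) as [r [HrG [Hrp Hrr0]]].
    exists r. split; [|split]; auto. intros a q Ha Hyaq [s [HsP [Hsr Hsq]]].
    destruct (dom_pair_in_components y a q Dy Hyaq) as [Da Dq].
    apply (Hinc a Da q Dq Ha Hyaq). exists s. split; [|split]; auto.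
    apply (le_trans s r r0); auto. apply generic_sub; auto.
Qed.

Lemma old_of_new_name u : D u -> new_name u ->
  forall S g, D S -> new_attempt S -> pair_in S u g -> old_name g.
Proof.
  induction u as [u IH] using (well_founded_ind name_child_wf). intros Du Hu S g DS HSa Hug.
  destruct (attempt_value _ _ S u g DS HSa Hug) as [Dg [_ [[Huu _]|[_ [Hgu Hgm]]]]].
  { exfalso. exact (new_name_not_ur u Hu Huu). }
  apply old_name_set; auto. intros z Hz. apply (Hgm z (dom_trans g z Dg Hz)) in Hz as [H|H].
  - destruct H as [y [_ [p [_ [a [_ [q [_ [r [_ [_ [Ha [_ [HrP [_ [_ Hz]]]]]]]]]]]]]]]].
    exists a, r. split; [|split]; auto. apply old_name_ur; auto.
  - destruct H as [y [Dy [p [_ [y' [_ [r [_ [Huy [Hyu [HSy [HrP [_ [_ Hz]]]]]]]]]]]]]].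
    exists y', r. split; [|split]; auto.
    destruct (new_name_pair u y p Hu Huy) as [_ [Hy|Hy]]; [|contradiction].
    exact (IH y (ex_intro _ p Huy) Dy Hy S y' DS HSa HSy).
Qed.

Section OldOfNewChildren.
Variables u S g : U.
Hypothesis Du : D u.
Hypothesis Hu : new_name u.
Hypothesis DS : D S.
Hypothesis Hcov : covers name_child u S.
Hypothesis Hg : forall z, mem z g <-> D z /\ new_child_image u S z.
Hypothesis IH : forall y p y', pair_in u y p -> new_name y -> pair_in S y y' ->
  forall z, new_eval y z -> ~ ur z -> old_eval y' z.

Lemma old_of_new_child_in y p z : pair_in u y p -> new_name y -> mem p G -> new_eval y z ->
  exists s r, pair_in g s r /\ mem r G /\ old_eval s z.
Proof.
  intros Huy Hy HpG Hyz.
  destruct (dom_pair_in_components u y p Du Huy) as [Dy Dp].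
  destruct (Hcov y (ex_intro _ p Huy)) as [y' HSy].
  destruct (dom_pair_in_components S y y' DS HSy) as [_ Dy'].
  destruct (new_eval_cases y z Hyz) as [[a [q [Ha [Hyaq [HqG ->]]]]]|[Hnoy [Hzu _]]].
  - destruct (generic_directed p q HpG HqG) as [r [HrG [Hrp Hrq]]].
    destruct (dom_pair_in_components y a q Dy Hyaq) as [Da Dq].
    assert (Dr : D r) by exact (dom_condition r (generic_sub r HrG)).
    destruct (model_pair a r Da Dr) as [z1 [Dz1 Hz1]].
    exists a, r. split; [|split; [auto | apply old_eval_ur; auto]].
    exists z1. split; auto. apply Hg. split; auto. left.
    exists y. split; auto. exists p. split; auto. exists a. split; auto. exists q. split; auto.
    exists r. split; auto.
    exact (conj Huy (conj Ha (conj Hyaq (conj (generic_sub r HrG) (conj Hrp (conj Hrq Hz1)))))).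
  - destruct (generic_decides_urelement y p Dy Hy HpG Hnoy) as [r [HrG [Hrp Hinc]]].
    assert (Dr : D r) by exact (dom_condition r (generic_sub r HrG)).
    destruct (model_pair y' r Dy' Dr) as [z1 [Dz1 Hz1]].
    exists y', r. split; [|split; [auto | exact (IH y p y' Huy Hy HSy z Hyz Hzu)]].
    exists z1. split; auto. apply Hg. split; auto. right.
    exists y. split; auto. exists p. split; auto. exists y'. split; auto. exists r. split; auto.
    refine (conj Huy (conj (new_name_not_ur y Hy) (conj HSy (conj (generic_sub r HrG)
              (conj Hrp (conj _ Hz1)))))).
    intros a _ q _ Ha Hyaq. exact (Hinc a q Ha Hyaq).
Qed.

Lemma old_of_new_pair_in s r : pair_in g s r -> mem r G ->
  exists y p, pair_in u y p /\ new_name y /\ mem p G /\ forall z, new_eval y z -> old_eval s z.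
Proof.
  intros [z1 [Hz1 Hp1]] HrG. apply Hg in Hz1 as [_ [H|H]].
  - destruct H as [y [Dy [p [_ [a [_ [q [_ [r' [_ [Huy [Ha [Hyaq [_ [Hrp [Hrq Hz]]]]]]]]]]]]]]]].
    destruct (is_pair_inj _ _ _ _ _ Hp1 Hz) as [-> <-].
    destruct (new_name_pair u y p Hu Huy) as [HpP [Hy|Hyu]].
    2: { exfalso. destruct Hyaq as [z' [Hz' _]]. exact (ur_no_mem y z' Hyu Hz'). }
    assert (HqG : mem q G) by exact (generic_up r q HrG (proj1 (new_name_pair y a q Hy Hyaq)) Hrq).
    exists y, p. split; [|split; [|split]]; auto; [exact (generic_up r p HrG HpP Hrp)|].
    intros z Hyz. destruct (new_eval_cases y z Hyz) as [[a' [q' [Ha' [Hya'q' [Hq'G ->]]]]]|[Hnoy _]].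
    + destruct (classic (a = a')) as [<- | Hne]; [apply old_eval_ur; auto|].
      exfalso. exact (new_name_incompatible y a q a' q' Hy Ha Hyaq Hya'q' Hne
                        (generic_compatible q q' HqG Hq'G)).
    + exfalso. apply Hnoy. exists a, q. auto.
  - destruct H as [y [Dy [p [_ [y' [_ [r' [_ [Huy [Hyu [HSy [_ [Hrp [Hinc Hz]]]]]]]]]]]]]].
    destruct (is_pair_inj _ _ _ _ _ Hp1 Hz) as [-> <-].
    destruct (new_name_pair u y p Hu Huy) as [HpP [Hy|Hyu']]; [|contradiction].
    exists y, p. split; [|split; [|split]]; auto; [exact (generic_up r p HrG HpP Hrp)|].
    intros z Hyz. destruct (new_eval_cases y z Hyz) as [[a [q [Ha [Hyaq [HqG ->]]]]]|[_ [Hzu _]]].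
    + exfalso. destruct (dom_pair_in_components y a q Dy Hyaq) as [Da Dq].
      exact (Hinc a Da q Dq Ha Hyaq (generic_compatible r q HrG HqG)).
    + exact (IH y p y' Huy Hy HSy z Hyz Hzu).
Qed.

End OldOfNewChildren.

Lemma old_of_new_eval u : D u -> new_name u ->
  forall S g, D S -> new_attempt S -> pair_in S u g ->
  forall v, new_eval u v -> ~ ur v -> old_eval g v.
Proof.
  induction u as [u IH] using (well_founded_ind name_child_wf). intros Du Hu S g DS HSa Hug v Hv Hvu.
  destruct (attempt_value _ _ S u g DS HSa Hug) as [Dg [Hcov [[Huu _]|[_ [Hgu Hgm]]]]].
  { exfalso. exact (new_name_not_ur u Hu Huu). }
  pose proof (dom_members g _ Dg Hgm) as Hg.
  assert (IHc : forall y p y', pair_in u y p -> new_name y -> pair_in S y y' ->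
                  forall z, new_eval y z -> ~ ur z -> old_eval y' z).
  { intros y p y' Huy Hy HSy. destruct (dom_pair_in_components u y p Du Huy) as [Dy _].
    exact (IH y (ex_intro _ p Huy) Dy Hy S y' DS HSa HSy). }
  destruct (new_eval_cases u v Hv) as [[a [p [Ha [_ [_ ->]]]]]|[_ [_ [Hsub Hsup]]]];
    [contradiction|].
  apply old_eval_set; auto.
  - intros z Hz. destruct (Hsub z Hz) as [y [p [Huy [Hy [HpG Hyz]]]]].
    exact (old_of_new_child_in u S g Du DS Hcov Hg IHc y p z Huy Hy HpG Hyz).
  - intros s r Hgs HrG.
    destruct (old_of_new_pair_in u S g Hu Hg IHc s r Hgs HrG) as [y [p [Huy [Hy [HpG Hys]]]]].
    destruct (Hsup y p Huy Hy HpG) as [z [Hz Hyz]]. eauto.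
Qed.

Lemma ext_new_sub_ext_old x : ext_new mem ur P le m G x -> ext_old mem ur P m G x.
Proof.
  intros [t [Dt [Ht Htx]]]. destruct (classic (ur x)) as [Hx|Hx].
  - destruct (new_eval_cases t x Htx) as [[a [p [Ha [Htap [_ ->]]]]]|[_ [Hxu _]]];
      [|contradiction].
    exists a. split; [exact (proj1 (dom_pair_in_components t a p Dt Htap))|].
    split; [apply old_name_ur | apply old_eval_ur]; auto.
  - destruct (new_attempt_total t Dt) as [S [DS [HSa [g Htg]]]].
    exists g. split; [exact (proj1 (attempt_value _ _ S t g DS HSa Htg))|]. split.
    + exact (old_of_new_name t Dt Ht S g DS HSa Htg).
    + exact (old_of_new_eval t Dt Ht S g DS HSa Htg x Htx Hx).
Qed.

Lemma ext_old_sub_ext_new x : ext_old mem ur P m G x -> ext_new mem ur P le m G x.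
Proof.
  intros [t [Dt [Ht Htx]]]. destruct (old_attempt_total t Dt) as [S [DS [HSa [s Hts]]]].
  exists s. split; [exact (proj1 (attempt_value _ _ S t s DS HSa Hts))|]. split.
  - exact (new_of_old_name t Dt Ht S s DS HSa Hts).
  - exact (new_of_old_eval t Dt Ht S s DS HSa Hts x Htx).
Qed.

End Names.
End TransitiveModel.

Theorem mainTheorem20 (U : Type) (mem : U -> U -> Prop) (ur : U -> Prop)
  (HV : ZFU_universe mem ur)
  (m : U) (Hm : ctm_ZFU_R mem ur m)
  (P le one : U) (HPm : mem P m) (Hlem : mem le m) (Honem : mem one m)
  (HP : forcing_poset mem ur P le one)
  (G : U) (HG : generic mem ur P le one m G) :
  forall x, ext_new mem ur P le m G x <-> ext_old mem ur P m G x.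
Proof.
  intros x. split.
  - exact (ext_new_sub_ext_old mem ur HV m Hm P le one G HPm Hlem HP HG x).
  - exact (ext_old_sub_ext_new mem ur HV m Hm P le one G Honem HP HG x).
Qed.
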